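(* Let $\Omega\subseteq\mathbb{R}^n$ be open, $u:\Omega\to\mathbb{R}^N$ continuous, $x\in\Omega$, $\xi\in\mathbb{S}^{N-1}$ and $(P,\mathbf{X})\in\mathbb{R}^{N\times n}\times(\mathbb{R}^N\otimes\mathbb{R}^{n\times n}_s)$. The following are equivalent: (i) $(P,\mathbf{X})\in J^{2,\xi}u(x)$; (ii) there exists an increasing $\sigma\in C^2(0,\infty)$ with $\sigma(0^+)=0$ such that, as $z\to0$, writing $Q(z):=u(z+x)-u(x)-Pz-\frac12\mathbf{X}:z\otimes z$, $$\xi^\top Q(z)\le-\frac{|\xi^\perp Q(z)|^2}{\sigma(|z|)|z|^2}+\sigma(|z|)|z|^2.$$
   Context: $\mathbb{R}^N\otimes\mathbb{R}^{n\times n}_s$ is the space of arrays $\mathbf{X}=(\mathbf{X}_{\alpha ij})$ symmetric in $i,j$; $\mathbf{X}:z\otimes z\in\mathbb{R}^N$ has components $\sum_{i,j}\mathbf{X}_{\alpha ij}z_iz_j$. For $a,b\in\mathbb{R}^N$, $a\vee b:=\frac12(a\otimes b+b\otimes a)$; matrix inequalities in the sense of quadratic forms; $\xi^\perp:=I-\xi\otimes\xi$. Second contact jet: $J^{2,\xi}u(x)$ is the set of $(P,\mathbf{X})$ for which there is a continuous $T:\mathbb{R}^n\setminus\{0\}\to\mathbb{R}^{N\times N}_s$ with $|T(y)|\to0$ as $y\to0$ and $\xi\vee[u(z)-u(x)-P(z-x)-\frac12\mathbf{X}:(z-x)\otimes(z-x)]\le|z-x|^2T(z-x)$ for all $z\ne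 x$ near $x$. *)

From HB Require Import structures.
From mathcomp Require Import all_boot all_order all_algebra.
From mathcomp Require Import all_classical all_reals all_analysis.
Set Implicit Arguments. Unset Strict Implicit. Unset Printing Implicit Defensive.
Import Order.TTheory GRing.Theory Num.Theory.
Import numFieldNormedType.Exports.
Local Open Scope classical_set_scope.
Local Open Scope ring_scope.

Definition enorm (R : realType) (k : nat) (v : 'cV[R]_k) : R :=
  Num.sqrt (\sum_(i < k) (v i 0) ^+ 2).

(* X : R^N (x) R^{n x n}_s, represented as a family of n x n matrices *)
Definition tensor_sym (R : realType) (N n : nat) (X : 'I_N -> 'M[R]_n) : Prop :=
  forall a, (X a)^T = X a.

Definition tcontract (R : realType) (N n : nat) (X : 'I_N -> 'M[R]_n)
  (z : 'cV[R]_n) : 'cV[R]_N :=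
  \col_(a < N) \sum_(i < n) \sum_(j < n) X a i j * z i 0 * z j 0.

Definition symprod (R : realType) (N : nat) (a b : 'cV[R]_N) : 'M[R]_N :=
  2^-1 *: (a *m b^T + b *m a^T).

Definition mx_le (R : realType) (N : nat) (A B : 'M[R]_N) : Prop :=
  forall w : 'cV[R]_N, (w^T *m A *m w) 0 0 <= (w^T *m B *m w) 0 0.

Definition contact_jet2 (R : realType) (n N : nat)
  (u : 'cV[R]_n -> 'cV[R]_N) (x : 'cV[R]_n) (xi : 'cV[R]_N)
  (P : 'M[R]_(N, n)) (X : 'I_N -> 'M[R]_n) : Prop :=
  exists T : 'cV[R]_n -> 'M[R]_N,
    {within [set y | y != 0], continuous T} /\
    (T y @[y --> (0 : 'cV[R]_n)^'] --> (0 : 'M[R]_N)) /\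
    (\forall z \near x, z != x ->
       mx_le (symprod xi (u z - u x - P *m (z - x) - 2^-1 *: tcontract X (z - x)))
             ((enorm (z - x)) ^+ 2 *: T (z - x))).

Definition C2_on (R : realType) (A : set R) (s : R -> R) : Prop :=
  (forall t, A t -> derivable s t 1) /\
  (forall t, A t -> derivable (derive1 s) t 1) /\
  (forall t, A t -> {for t, continuous (derive1n 2 s)}).

(* Write [Q] for the second-order Taylor remainder of [u] at [x].  The
   quadratic form of [xi \vee Q] at [w] is [(w.xi) (w.Q)].  If the contact
   inequality holds with [s = sigma |z| |z|^2], splitting [Q] into its
   components along and orthogonal to [xi] and using AM-GM bounds this form by
   [2 s |w|^2], so [T z = 2 sigma |z| I] witnesses the jet.  Conversely the
   jet inequality bounds the form by [|z|^2 rho z |w|^2] with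
   [rho z = N^2 |T z| -> 0], and testing it at [w = xi + (2/s) Q^perp] gives
   the contact inequality as soon as [sigma |z| >= 4 rho z].  Such a [sigma]
   is [t + sum_j 2^-j psi_j t] with the C^2 ramps
   [psi_j t = 1 - (1 - t/d_j)_+^3] and radii [d_j] decreasing to 0 such that
   [4 rho <= 2^-j] on the punctured ball of radius [d_j]: when
   [d_(k+1) <= |z| < d_k] every ramp of index [> k] is saturated, and their
   weights add up to [2^-k]. *)

From mathcomp Require Import all_boot all_order all_algebra.
From mathcomp Require Import all_classical all_reals all_analysis.
From mathcomp Require Import ring lra.
Import Order.TTheory GRing.Theory Num.Theory.
Import numFieldNormedType.Exports.
Local Open Scope classical_set_scope.
Local Open Scope ring_scope.
Set Implicit Arguments. Unset Strict Implicit. Unset Printing Implicit Defensive.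

Section DotProduct.
Variable R : realType.

Definition dotv k (u v : 'cV[R]_k) : R := \sum_i u i 0 * v i 0.

Definition orthpart k (xi Q : 'cV[R]_k) : 'cV[R]_k := Q - dotv xi Q *: xi.

Lemma dotvE k (u v : 'cV[R]_k) : (u^T *m v) 0 0 = dotv u v.
Proof. by rewrite mxE; apply: eq_bigr => i _; rewrite mxE. Qed.

Lemma dotvC k (u v : 'cV[R]_k) : dotv u v = dotv v u.
Proof. by apply: eq_bigr => i _; rewrite mulrC. Qed.

Lemma dotvDr k (u v w : 'cV[R]_k) : dotv u (v + w) = dotv u v + dotv u w.
Proof. by rewrite /dotv -big_split; apply: eq_bigr => i _; rewrite mxE mulrDr. Qed.

Lemma dotvZr k (u v : 'cV[R]_k) c : dotv u (c *: v) = c * dotv u v.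
Proof. by rewrite /dotv mulr_sumr; apply: eq_bigr => i _; rewrite mxE mulrCA. Qed.

Lemma dotvNr k (u v : 'cV[R]_k) : dotv u (- v) = - dotv u v.
Proof. by rewrite -scaleN1r dotvZr mulN1r. Qed.

Lemma dotvBr k (u v w : 'cV[R]_k) : dotv u (v - w) = dotv u v - dotv u w.
Proof. by rewrite dotvDr dotvNr. Qed.

Lemma dotvDl k (u v w : 'cV[R]_k) : dotv (v + w) u = dotv v u + dotv w u.
Proof. by rewrite dotvC dotvDr !(dotvC u). Qed.

Lemma dotvZl k (u v : 'cV[R]_k) c : dotv (c *: v) u = c * dotv v u.
Proof. by rewrite dotvC dotvZr dotvC. Qed.

Lemma dotvBl k (u v w : 'cV[R]_k) : dotv (v - w) u = dotv v u - dotv w u.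
Proof. by rewrite dotvC dotvBr !(dotvC u). Qed.

Lemma dotvv_ge0 k (u : 'cV[R]_k) : 0 <= dotv u u.
Proof. by apply: sumr_ge0 => i _; rewrite -expr2 sqr_ge0. Qed.

Lemma sqr_coord_le_dotvv k (w : 'cV[R]_k) i : w i 0 ^+ 2 <= dotv w w.
Proof.
rewrite /dotv (bigD1 i) //= -expr2 lerDl.
by apply: sumr_ge0 => j _; rewrite -expr2 sqr_ge0.
Qed.

Lemma dotv_AMGM k (u v : 'cV[R]_k) c : 0 < c ->
  2 * dotv u v <= c * dotv u u + dotv v v / c.
Proof.
move=> c_gt0; have := dotvv_ge0 (c *: u - v).
rewrite dotvBl !dotvBr !dotvZl !dotvZr (dotvC v u) => h.
rewrite -subr_ge0 -(pmulr_rge0 _ c_gt0).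
have -> : c * (c * dotv u u + dotv v v / c - 2 * dotv u v) =
    c * (c * dotv u u) - c * dotv u v - (c * dotv u v - dotv v v).
  by field; rewrite gt_eqF.
exact: h.
Qed.

Lemma dotv_orthpart k (xi Q : 'cV[R]_k) : dotv xi xi = 1 ->
  dotv xi (orthpart xi Q) = 0.
Proof. by move=> xi1; rewrite dotvBr dotvZr xi1 mulr1 subrr. Qed.

Lemma orthpartK k (xi Q : 'cV[R]_k) : orthpart xi Q + dotv xi Q *: xi = Q.
Proof. exact: subrK. Qed.

Lemma mulmx_orthoproj k (xi Q : 'cV[R]_k) :
  (1%:M - xi *m xi^T) *m Q = orthpart xi Q.
Proof.
rewrite mulmxBl mul1mx -mulmxA (mx11_scalar (xi^T *m Q)) mul_mx_scalar.
by rewrite dotvE.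
Qed.

Lemma enorm_sqr k (v : 'cV[R]_k) : enorm v ^+ 2 = dotv v v.
Proof.
rewrite /enorm sqr_sqrtr; last by apply: sumr_ge0 => i _; rewrite sqr_ge0.
by apply: eq_bigr => i _; rewrite expr2.
Qed.

Lemma symprod_qform k (w a b : 'cV[R]_k) :
  (w^T *m symprod a b *m w) 0 0 = dotv w a * dotv w b.
Proof.
have mx11_mulmx (A : 'M[R]_1) (c : 'cV[R]_k) : (A *m c^T *m w) 0 0 = A 0 0 * dotv c w.
  by rewrite -mulmxA [LHS]mxE big_ord1 dotvE.
rewrite /symprod -scalemxAr -scalemxAl mxE mulmxDr mulmxDl mxE !mulmxA.
rewrite !mx11_mulmx !dotvE (dotvC b w) (dotvC a w).
by field.
Qed.

Lemma scalar_qform k (w : 'cV[R]_k) c :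
  (w^T *m (c *: 1%:M) *m w) 0 0 = c * dotv w w.
Proof. by rewrite -scalemxAr mulmx1 -scalemxAl mxE dotvE. Qed.

Lemma qform_le_mx_norm k (T : 'M[R]_k) (w : 'cV[R]_k) :
  (w^T *m T *m w) 0 0 <= k%:R ^+ 2 * `|T| * dotv w w.
Proof.
have entry_le i j : `|T i j| <= `|T|.
  change (`|T i j| <= mx_norm T); rewrite mx_normrE.
  by apply/bigmax_geP; right; exists (i, j).
have coord_le i j : `|w i 0| * `|w j 0| <= dotv w w.
  have := sqr_coord_le_dotvv w i; have := sqr_coord_le_dotvv w j.
  have := sqr_ge0 (`|w i 0| - `|w j 0|).
  rewrite -(real_normK (num_real (w i 0))) -(real_normK (num_real (w j 0))).
  by nra.
have -> : k%:R ^+ 2 * `|T| * dotv w w = \sum_(j < k) \sum_(i < k) `|T| * dotv w w.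
  by rewrite !sumr_const !card_ord -mulrnA -[_ *+ (k * k)]mulr_natl natrM expr2 mulrA.
rewrite mxE; apply: ler_sum => j _; rewrite mxE mulr_suml; apply: ler_sum => i _.
rewrite mxE; apply: le_trans (ler_norm _) _.
rewrite !normrM mulrAC mulrC.
by apply: ler_pM; rewrite ?mulr_ge0 ?entry_le ?coord_le.
Qed.

Lemma symprod_qform_le_of_contact_ineq k (xi Q w : 'cV[R]_k) (s : R) :
  0 < s -> dotv xi xi = 1 ->
  dotv xi Q <= - dotv (orthpart xi Q) (orthpart xi Q) / s + s ->
  dotv w xi * dotv w Q <= 2 * s * dotv w w.
Proof.
move=> s_gt0 xi1 contact.
set a := dotv xi Q; set q := orthpart xi Q; set A := dotv w xi.
set W := dotv w w; set H := dotv q q / s; set D := dotv w q.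
have wQ : dotv w Q = D + a * A by rewrite -[in LHS](orthpartK xi Q) dotvDr dotvZr.
have cross : 2 * (A * D) <= s * W + A ^+ 2 * H.
  have := dotv_AMGM w (A *: q) s_gt0.
  by rewrite !dotvZr !dotvZl -/D -/W expr2 !mulrA.
have A2_le : A ^+ 2 <= W.
  have := dotv_AMGM w (A *: xi) ltr01.
  by rewrite !dotvZr !dotvZl xi1 -/A -/W !mul1r divr1 mulr1 -expr2; lra.
have H_ge0 : 0 <= H by rewrite divr_ge0 ?dotvv_ge0 ?ltW.
have W_ge0 : 0 <= W := dotvv_ge0 w.
have aA2 : a * A ^+ 2 <= (- H + s) * A ^+ 2.
  by rewrite ler_wpM2r ?sqr_ge0 // -mulNr.
rewrite wQ mulrDr mulrCA -expr2.
have := sqr_ge0 A; nra.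
Qed.

Lemma contact_ineq_of_symprod_qform k (xi Q : 'cV[R]_k) (c s : R) :
  0 < s -> 4 * c <= s -> dotv xi xi = 1 ->
  (forall w, dotv w xi * dotv w Q <= c * dotv w w) ->
  dotv xi Q <= - dotv (orthpart xi Q) (orthpart xi Q) / s + s.
Proof.
move=> s_gt0 cs xi1 hw.
set a := dotv xi Q; set q := orthpart xi Q; set G := dotv q q.
have qxi : dotv q xi = 0 by rewrite dotvC dotv_orthpart.
have qQ : dotv q Q = G by rewrite -[in LHS](orthpartK xi Q) dotvDr dotvZr qxi mulr0 addr0.
have := hw (xi + (2 / s) *: q).
rewrite !dotvDl !dotvZl !dotvDr !dotvZr xi1 qxi qQ (dotvC xi Q) (dotvC xi q).
rewrite -/a -/G qxi !mulr0 !addr0 add0r mul1r => h.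
have G_ge0 : 0 <= G by apply: dotvv_ge0.
set g := G / s.
have g_ge0 : 0 <= g by rewrite divr_ge0 // ltW.
have lin : 2 / s * G = 2 * g by rewrite /g mulrAC mulrA.
have quad : c * (1 + 2 / s * (2 / s * G)) <= c + g.
  rewrite mulrDr mulr1 lerD2l.
  have -> : c * (2 / s * (2 / s * G)) = (4 * c / s) * g.
    by rewrite /g; field; rewrite gt_eqF.
  rewrite -[leRHS]mul1r ler_wpM2r // ler_pdivrMr // mul1r //.
have := le_trans h quad; rewrite (dotvC Q xi) -/a lin mulNr -/g; lra.
Qed.
End DotProduct.

Section EuclideanNorm.
Variable R : realType.

Lemma enorm_ge0 k (v : 'cV[R]_k) : 0 <= enorm v.
Proof. exact: sqrtr_ge0. Qed.

Lemma enorm0 k : enorm (0 : 'cV[R]_k) = 0.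
Proof. by rewrite /enorm big1 ?sqrtr0 // => i _; rewrite mxE expr0n. Qed.

Lemma enorm_gt0 k (v : 'cV[R]_k) : v != 0 -> 0 < enorm v.
Proof.
move=> v_neq0; rewrite lt_def enorm_ge0 andbT.
apply: contra v_neq0 => /eqP v0.
have := enorm_sqr v; rewrite v0 expr0n /= => /esym/eqP.
rewrite psumr_eq0 => [/allP v_eq0|i _]; last by rewrite -expr2 sqr_ge0.
apply/eqP/matrixP => i j; rewrite (ord1 j) mxE.
by have := v_eq0 i (mem_index_enum i); rewrite mulf_eq0 orbb => /eqP.
Qed.

Lemma mx_norm_le_enorm k (v : 'cV[R]_k) : `|v| <= enorm v.
Proof.
change (mx_norm v <= enorm v); rewrite mx_normrE.
apply: bigmax_le => [|[i j] _]; first exact: enorm_ge0.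
rewrite (ord1 j) -sqrtr_sqr /enorm; apply: ler_wsqrtr.
have := sqr_coord_le_dotvv v i; rewrite /dotv.
by rewrite (eq_bigr (fun i => v i 0 ^+ 2)) // => ? _; rewrite expr2.
Qed.

Lemma continuous_enorm k : continuous (@enorm R k).
Proof.
move=> v; apply: continuous_comp; last exact: sqrt_continuous.
apply: (@continuous_big _ _ +%R 0 xpredT add_continuous) => i _ w.
by apply: continuousM; exact: coord_continuous.
Qed.

Lemma near0_enorm k (P : 'cV[R]_k -> Prop) :
  (\forall y \near (0 : 'cV[R]_k), P y) -> exists2 e, 0 < e & forall y, enorm y < e -> P y.
Proof.
move=> /nbhs_norm0P [e e_gt0 Pe]; exists e => // y ye; apply: Pe.
exact: le_lt_trans (mx_norm_le_enorm y) ye.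
Qed.

Lemma enorm_cvg0 k : enorm y @[y --> (0 : 'cV[R]_k)^'] --> (0 : R)^'+.
Proof.
move=> A A0; have A0' : \forall t \near (0 : R), 0 < t -> A t := A0.
have enorm_cvg : enorm y @[y --> (0 : 'cV[R]_k)] --> (0 : R).
  by rewrite -[X in _ --> X](enorm0 k); apply: continuous_enorm.
have : \forall y \near (0 : 'cV[R]_k), 0 < enorm y -> A (enorm y) := enorm_cvg _ A0'.
by apply: filterS => y Ay y_neq0; apply: Ay; apply: enorm_gt0.
Qed.

Lemma dnbhs0_shift k (x : 'cV[R]_k) (P : 'cV[R]_k -> Prop) :
  (\forall y \near (0 : 'cV[R]_k)^', P y) <-> (\forall z \near x, z != x -> P (z - x)).
Proof.
rewrite (near_shift 0 x) /dnbhs near_withinE; split; apply: filterS => y /= Py.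
- rewrite subr0 addrK => yx; apply: Py.
  by apply: contra_neq yx => ->; rewrite add0r.
- move=> y_neq0; move: Py; rewrite subr0 addrK; apply.
  by apply: contra_neq y_neq0 => yx; apply: (addIr x); rewrite add0r.
Qed.

End EuclideanNorm.

Section PositivePartPower.
Variable R : realType.

Definition pospow (m : nat) (x : R) : R := Num.max x 0 ^+ m.

Lemma pospow_ge0 m x : 0 <= pospow m x.
Proof. by rewrite exprn_ge0 // le_max lexx orbT. Qed.

Lemma pospow_gt0E m x : 0 < x -> pospow m x = x ^+ m.
Proof. by move=> x_gt0; rewrite /pospow max_l // ltW. Qed.

Lemma pospow_le0E m x : x <= 0 -> pospow m.+1 x = 0.
Proof. by move=> x_le0; rewrite /pospow max_r // expr0n. Qed.

Lemma pospow_homo m : {homo pospow m : x y / x <= y}.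
Proof.
have max_ge0 (z : R) : 0 <= Num.max z 0 by rewrite le_max lexx orbT.
move=> x y xy; apply: lerXn2r; rewrite ?nnegrE //.
by rewrite ge_max !le_max xy lexx !orbT.
Qed.

Lemma pospow_mulE m x : pospow m.+2 x = x * pospow m.+1 x.
Proof.
have [x_le0|x_gt0] := lerP x 0; first by rewrite !pospow_le0E // mulr0.
by rewrite !pospow_gt0E // exprS.
Qed.

Lemma continuous_pospow m : continuous (pospow m).
Proof.
move=> x; apply: (@continuous_comp _ _ _ (fun y : R => Num.max y 0) (fun y => y ^+ m)).
  exact: (@continuous_max _ _ id (cst 0) x cvg_id (@cst_continuous _ _ 0 x)).
exact: exprn_continuous.
Qed.

Lemma is_derive_pospow m (x : R) :
  is_derive x 1 (pospow m.+2) (m.+2%:R * pospow m.+1 x).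
Proof.
have [x_lt0|x_gt0|->] := ltgtP x 0.
- rewrite pospow_le0E ?ltW // mulr0.
  apply: near_eq_is_derive (is_derive_cst 0 x 1).
  by near=> y; rewrite pospow_le0E // ltW //; near: y; exact: lt_nbhsl.
- apply: (near_eq_is_derive (f := (@id R) ^+ m.+2)).
    by near=> y; rewrite pospow_gt0E ?exprfctE //; near: y; exact: lt_nbhsr.
  by apply: is_derive_eq; rewrite pospow_gt0E // [_%:A]mulr1.
- rewrite pospow_le0E // mulr0.
  have quot : h^-1 *: ((pospow m.+2 \o shift 0) (h *: 1) - pospow m.+2 0)
      @[h --> (0 : R)^'] --> pospow m.+1 0.
    apply: cvg_trans (cvg_within_filter _ (@continuous_pospow m.+1 0)).
    apply: near_eq_cvg; near=> h.
    have h_neq0 : h != 0 by near: h; exact: nbhs_dnbhs_neq.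
    rewrite /= pospow_mulE (pospow_le0E _ (lexx 0)) subr0 [_%:A]mulr1 addr0.
    have -> : h^-1 *: (h * pospow m.+1 h) = h^-1 * (h * pospow m.+1 h) by [].
    by rewrite mulKf.
  rewrite (pospow_le0E m (lexx 0)) in quot.
  apply: DeriveDef; first by apply/cvg_ex; exists 0.
  exact: cvg_lim quot.
Unshelve. all: by end_near.
Qed.
End PositivePartPower.

Lemma is_derive1_comp (R : realType) (f g : R -> R) (t df dg : R) :
  is_derive t 1 f df -> is_derive (f t) 1 g dg -> is_derive t 1 (g \o f) (dg * df).
Proof.
move=> [fd <-] [gd <-]; apply: DeriveDef.
  by apply/derivable1_diffP/differentiable_comp; apply/derivable1_diffP.
by rewrite -derive1E derive1_comp // !derive1E.
Qed.

Section Ramp.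
Variables (R : realType) (c : R).
Hypothesis c_gt0 : 0 < c.

Definition ramp (t : R) : R := 1 - pospow 3 (1 - t / c).
Definition dramp (t : R) : R := 3 * pospow 2 (1 - t / c) / c.
Definition ddramp (t : R) : R := - (6 / c ^+ 2) * pospow 1 (1 - t / c).

Lemma is_derive_ramp_arg (t : R) : is_derive t 1 (fun s : R => 1 - s / c) (- c^-1).
Proof.
have -> : (fun s : R => 1 - s / c) = cst 1 - c^-1 \*: id.
  by apply/funext => s; rewrite /= mulrC.
by apply: is_derive_eq; rewrite sub0r [_%:A]mulr1.
Qed.

Lemma ramp0 : ramp 0 = 0.
Proof. by rewrite /ramp mul0r subr0 pospow_gt0E // expr1n subrr. Qed.

Lemma ramp_le1 t : ramp t <= 1.
Proof. by rewrite /ramp lerBlDr lerDl pospow_ge0. Qed.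

Lemma ramp_homo : {homo ramp : s t / s <= t}.
Proof.
move=> s t st; rewrite lerD2l lerN2; apply: pospow_homo.
by rewrite lerD2l lerN2 ler_pM2r ?invr_gt0.
Qed.

Lemma ramp_ge0 t : 0 <= t -> 0 <= ramp t.
Proof. by move=> t_ge0; rewrite -ramp0 ramp_homo. Qed.

Lemma ramp_eq1 t : c <= t -> ramp t = 1.
Proof.
by move=> ct; rewrite /ramp pospow_le0E ?subr0 // subr_le0 ler_pdivlMr ?mul1r.
Qed.

Lemma is_derive_ramp (t : R) : is_derive t 1 ramp (dramp t).
Proof.
have -> : ramp = cst 1 - pospow 3 \o (fun s => 1 - s / c) by [].
have := is_derive1_comp (is_derive_ramp_arg t) (is_derive_pospow 1 (1 - t / c)).
move=> /is_deriveN /(is_deriveD (is_derive_cst (1 : R) t 1)) /is_derive_eq; apply.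
by rewrite /dramp add0r mulrN opprK mulrA.
Qed.

Lemma is_derive_dramp (t : R) : is_derive t 1 dramp (ddramp t).
Proof.
have -> : dramp = (3 / c) \*: (pospow 2 \o (fun s => 1 - s / c)).
  by apply/funext => s; rewrite /dramp /= mulrAC.
have := is_derive1_comp (is_derive_ramp_arg t) (is_derive_pospow 0 (1 - t / c)).
move=> /(is_deriveZ (3 / c)) /is_derive_eq; apply.
have scaleE (a b : R) : a *: b = a * b by [].
by rewrite scaleE /ddramp; field; rewrite gt_eqF.
Qed.

Lemma continuous_ddramp : continuous ddramp.
Proof.
have -> : ddramp = (- (6 / c ^+ 2)) \*: (pospow 1 \o (fun s => 1 - s / c)) by [].
move=> t; apply: continuousZl_tmp; apply: continuous_comp; last exact: continuous_pospow.
apply/differentiable_continuous/derivable1_diffP.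
exact: (@ex_derive _ _ _ _ _ _ _ (is_derive_ramp_arg t)).
Qed.
End Ramp.

Lemma near_eq_C2 (R : realType) (f g dg ddg : R -> R) (t0 : R) :
  (\forall t \near t0, g t = f t) ->
  (forall t : R, is_derive t 1 g (dg t)) -> (forall t : R, is_derive t 1 dg (ddg t)) ->
  continuous ddg ->
  [/\ derivable f t0 1, derivable (derive1 f) t0 1 &
       {for t0, continuous (derive1n 2 f)}].
Proof.
move=> gf g_dg dg_ddg ddg_cont.
have dfE : \forall t \near t0, dg t = derive1 f t.
  apply: filterS (near_join gf) => t gf_t.
  by rewrite derive1E -(near_eq_derive _ gf_t) (@derive_val _ _ _ _ _ _ _ (g_dg t)).
have ddfE : \forall t \near t0, ddg t = derive1n 2 f t.
  apply: filterS (near_join dfE) => t dfE_t.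
  by rewrite /= derive1E -(near_eq_derive _ dfE_t) (@derive_val _ _ _ _ _ _ _ (dg_ddg t)).
split.
- exact: near_eq_derivable gf (@ex_derive _ _ _ _ _ _ _ (g_dg t0)).
- exact: near_eq_derivable dfE (@ex_derive _ _ _ _ _ _ _ (dg_ddg t0)).
- have ddg_t0 : ddg t0 = derive1n 2 f t0 := nbhs_singleton ddfE.
  apply: cvg_trans (near_eq_cvg ddfE) _.
  by rewrite -ddg_t0; apply: ddg_cont.
Qed.

Section Majorant.
Variables (R : realType) (d : nat -> R).
Hypotheses (d_gt0 : forall j, 0 < d j) (d_le_inv : forall j, d j <= j.+1%:R^-1)
  (d_noninc : nonincreasing_seq d).

Definition halfpow (j : nat) : R := 2^-1 ^+ j.

(* [ramp (d j)] rises from 0 at 0 to 1 at [d j] and stays there, while the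
   weights satisfy [\sum_(j >= K) halfpow j = 2 * halfpow K]; so for
   [K >= truncn t^-1] the truncation [sigma_trunc K t] no longer depends on
   [K], and [majorant t] is the locally finite series
   [t + \sum_j halfpow j * ramp (d j) t]. *)
Definition sigma_trunc (K : nat) (t : R) : R :=
  t + \sum_(j < K) halfpow j * ramp (d j) t + 2 * halfpow K.

Definition majorant (t : R) : R := sigma_trunc (Num.truncn t^-1) t.

Lemma halfpow_gt0 j : 0 < halfpow j.
Proof. by rewrite exprn_gt0 // invr_gt0. Qed.

Lemma halfpowS j : 2 * halfpow j.+1 = halfpow j.
Proof. by rewrite /halfpow exprS mulrA divff ?mul1r // pnatr_eq0. Qed.

Lemma halfpow_le_inv j : halfpow j <= j.+1%:R^-1.
Proof.
rewrite /halfpow exprVn lef_pV2 ?posrE ?exprn_gt0 ?ltr0n //.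
by rewrite -natrX ler_nat ltn_expl.
Qed.

Lemma exists_halfpow_lt e : 0 < e -> exists m, 2 * halfpow m < e.
Proof.
move=> e_gt0; exists (Num.truncn (2 / e)).
apply: le_lt_trans (ler_wpM2l _ (halfpow_le_inv _)) _ => //.
set M := (Num.truncn (2 / e)).+1%:R; have M_gt0 : 0 < M by rewrite ltr0n.
have := truncnS_gt (2 / e); rewrite -/M ltr_pdivrMr // => eM.
by rewrite ltr_pdivrMr // mulrC.
Qed.

Lemma sum_ramp_ge0 K t : 0 <= t -> 0 <= \sum_(j < K) halfpow j * ramp (d j) t.
Proof.
move=> t_ge0; apply: sumr_ge0 => j _.
by apply: mulr_ge0; [exact: ltW (halfpow_gt0 _) | exact: ramp_ge0].
Qed.

Lemma sigma_truncS K t : ramp (d K) t = 1 -> sigma_trunc K.+1 t = sigma_trunc K t.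
Proof.
move=> rK1; rewrite /sigma_trunc big_ord_recr /= rK1 mulr1 halfpowS; ring.
Qed.

Lemma sigma_trunc_nonincr t : nonincreasing_seq (sigma_trunc ^~ t).
Proof.
apply/nonincreasing_seqP => K; rewrite /sigma_trunc big_ord_recr /= -(halfpowS K).
have r1 : ramp (d K) t <= 1 by exact: ramp_le1.
have h_gt0 : 0 < halfpow K.+1 by exact: halfpow_gt0.
nra.
Qed.

Lemma sigma_trunc_stable m t : (forall j, (m <= j)%N -> ramp (d j) t = 1) ->
  forall K, (m <= K)%N -> sigma_trunc K t = sigma_trunc m t.
Proof.
move=> ramp1; elim=> [|K IH]; first by rewrite leqn0 => /eqP ->.
rewrite leq_eqVlt => /orP[/eqP -> //|]; rewrite ltnS => mK.
by rewrite sigma_truncS ?IH // ramp1.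
Qed.

Lemma d_le_of_truncn t j : 0 < t -> (Num.truncn t^-1 <= j)%N -> d j <= t.
Proof.
move=> t_gt0 tj; apply: le_trans (d_le_inv j) _.
rewrite -[leRHS]invrK lef_pV2 ?posrE ?invr_gt0 //; apply: ltW.
by apply: lt_le_trans (truncnS_gt _) _; rewrite ler_nat.
Qed.

Lemma majorantE t K : 0 < t -> (Num.truncn t^-1 <= K)%N ->
  majorant t = sigma_trunc K t.
Proof.
move=> t_gt0 tK; rewrite (sigma_trunc_stable _ tK) // => j tj.
by apply: ramp_eq1 => //; apply: d_le_of_truncn.
Qed.

Lemma majorant_ge_halfpow t k : 0 < t -> d k.+1 <= t -> halfpow k <= majorant t.
Proof.
move=> t_gt0 dk; rewrite (majorantE (K := maxn (Num.truncn t^-1) k.+1)) ?leq_maxl //.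
rewrite (sigma_trunc_stable (m := k.+1)) ?leq_maxr //; last first.
  by move=> j kj; apply: ramp_eq1 => //; apply: le_trans dk; apply: d_noninc.
by rewrite /sigma_trunc -halfpowS lerDr addr_ge0 ?sum_ramp_ge0 ?(ltW t_gt0).
Qed.

Lemma radius_bracket t : 0 < t -> t < d 0 -> exists k, t < d k /\ d k.+1 <= t.
Proof.
move=> t_gt0 td0.
suff : forall m, d m <= t -> exists k, t < d k /\ d k.+1 <= t.
  by apply; apply: (d_le_of_truncn (j := Num.truncn t^-1)).
elim=> [|m IH] dm; first by move: (lt_le_trans td0 dm); rewrite ltxx.
by have [dmt|tdm] := lerP (d m) t; [exact: IH | exists m].
Qed.

Lemma majorant_lt s t : 0 < s -> s < t -> majorant s < majorant t.
Proof.
move=> s_gt0 st; have t_gt0 := lt_trans s_gt0 st.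
set K := maxn (Num.truncn s^-1) (Num.truncn t^-1).
rewrite (majorantE (K := K)) ?leq_maxl // (majorantE (K := K)) ?leq_maxr //.
rewrite /sigma_trunc ltr_leD // ltr_leD //; apply: ler_sum => j _.
by rewrite ler_wpM2l ?ramp_homo ?ltW ?halfpow_gt0.
Qed.

Lemma majorant_mono : {in `]0, +oo[ &, {mono majorant : s t / s < t}}.
Proof.
move=> s t; rewrite !in_itv /= !andbT => s_gt0 t_gt0.
case: (ltgtP s t) => [st|ts|->]; first by rewrite majorant_lt.
  by apply/negbTE; rewrite -leNgt ltW // majorant_lt.
by rewrite ltxx.
Qed.

Definition dsigma_trunc (K : nat) (t : R) : R :=
  1 + \sum_(j < K) halfpow j * dramp (d j) t.

Definition ddsigma_trunc (K : nat) (t : R) : R :=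
  \sum_(j < K) halfpow j * ddramp (d j) t.

Lemma is_derive_sigma_trunc K (t : R) :
  is_derive t 1 (sigma_trunc K) (dsigma_trunc K t).
Proof.
have -> : sigma_trunc K =
    id + \sum_(j < K) halfpow j \*: ramp (d j) + cst (2 * halfpow K).
  by apply/funext => s; rewrite /sigma_trunc /= fct_sumE.
have ramps := is_derive_sum
  (fun j : 'I_K => is_deriveZ (halfpow j) (is_derive_ramp (d j) t)).
have := is_deriveD (is_deriveD (is_derive_id t (1 : R)) ramps)
  (is_derive_cst (2 * halfpow K) t 1).
by move=> /is_derive_eq; apply; rewrite addr0.
Qed.

Lemma is_derive_dsigma_trunc K (t : R) :
  is_derive t 1 (dsigma_trunc K) (ddsigma_trunc K t).
Proof.
have -> : dsigma_trunc K = cst 1 + \sum_(j < K) halfpow j \*: dramp (d j).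
  by apply/funext => s; rewrite /dsigma_trunc /= fct_sumE.
have dramps := is_derive_sum
  (fun j : 'I_K => is_deriveZ (halfpow j) (is_derive_dramp (d_gt0 j) t)).
have := is_deriveD (is_derive_cst (1 : R) t 1) dramps.
by move=> /is_derive_eq; apply; rewrite add0r.
Qed.

Lemma continuous_ddsigma_trunc K : continuous (ddsigma_trunc K).
Proof.
apply: (@continuous_big _ _ +%R 0 xpredT add_continuous) => j _ t.
by apply: continuousZl_tmp; apply: continuous_ddramp.
Qed.

Lemma majorant_C2 : C2_on `]0, +oo[ majorant.
Proof.
suff C2 t0 : 0 < t0 -> [/\ derivable majorant t0 1,
    derivable (derive1 majorant) t0 1 & {for t0, continuous (derive1n 2 majorant)}].
  by split; [|split] => t; rewrite /= in_itv /= andbT => /C2 [].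
move=> t0_gt0; set c := t0 / 2.
have c_gt0 : 0 < c by rewrite divr_gt0.
have c_lt : c < t0 by rewrite ltr_pdivrMr // ltr_pMr // ltr1n.
apply: (near_eq_C2 _ (@is_derive_sigma_trunc (Num.truncn c^-1))
  (@is_derive_dsigma_trunc (Num.truncn c^-1)) (@continuous_ddsigma_trunc _)).
near=> t; have t_gt0 : 0 < t by apply: lt_trans c_gt0 _; near: t; exact: lt_nbhsr.
rewrite (majorantE (K := Num.truncn c^-1)) // le_truncn // lef_pV2 ?posrE //.
by apply: ltW; near: t; exact: lt_nbhsr.
Unshelve. all: by end_near.
Qed.

Lemma sigma_trunc0 K : sigma_trunc K 0 = 2 * halfpow K.
Proof. by rewrite /sigma_trunc big1 ?add0r // => j _; rewrite ramp0 mulr0. Qed.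

Lemma sigma_trunc_gt0 K t : 0 < t -> 0 < sigma_trunc K t.
Proof.
move=> t_gt0; have : 0 < halfpow K by exact: halfpow_gt0.
have : 0 <= \sum_(j < K) halfpow j * ramp (d j) t by exact: sum_ramp_ge0 (ltW t_gt0).
rewrite /sigma_trunc; lra.
Qed.

Lemma majorant_gt0 t : 0 < t -> 0 < majorant t.
Proof. exact: sigma_trunc_gt0. Qed.

Lemma majorant_le_sigma_trunc K t : 0 < t -> majorant t <= sigma_trunc K t.
Proof.
move=> t_gt0; rewrite (majorantE (K := maxn (Num.truncn t^-1) K)) ?leq_maxl //.
by apply: sigma_trunc_nonincr; rewrite leq_maxr.
Qed.

Lemma majorant_cvg0 : majorant t @[t --> 0^'+] --> 0.
Proof.
apply/cvgrPdist_lt => e e_gt0; have e2_gt0 : 0 < e / 2 by rewrite divr_gt0.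
have [m me] := exists_halfpow_lt e2_gt0.
have trunc_cont : {for 0, continuous (sigma_trunc m)}.
  apply/differentiable_continuous/derivable1_diffP.
  exact: (@ex_derive _ _ _ _ _ _ _ (is_derive_sigma_trunc m 0)).
move/cvgrPdist_lt: trunc_cont => /(_ _ e2_gt0); rewrite sigma_trunc0 => near_m.
rewrite /at_right near_withinE; apply: filterS near_m => t tm t_gt0.
have := majorant_le_sigma_trunc m t_gt0; have := majorant_gt0 t_gt0.
have := ler_norm (sigma_trunc m t - 2 * halfpow m).
rewrite distrC sub0r normrN => tm' maj_gt0.
rewrite gtr0_norm //; lra.
Qed.
End Majorant.

Fixpoint runmin (R : realDomainType) (e : nat -> R) (j : nat) : R :=
  if j is i.+1 then Num.min (runmin e i) (e j) else e 0.

Lemma runmin_le (R : realDomainType) (e : nat -> R) j : runmin e j <= e j.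
Proof. by case: j => [|j] //=; rewrite ge_min lexx orbT. Qed.

Lemma runmin_gt0 (R : realDomainType) (e : nat -> R) :
  (forall j, 0 < e j) -> forall j, 0 < runmin e j.
Proof. by move=> e_gt0; elim=> [|j IH] //=; rewrite lt_min IH e_gt0. Qed.

Lemma runmin_noninc (R : realDomainType) (e : nat -> R) : nonincreasing_seq (runmin e).
Proof. by apply/nonincreasing_seqP => j /=; rewrite ge_min lexx. Qed.

Lemma shrinking_radii (R : realType) k (P : nat -> 'cV[R]_k -> Prop) :
  (forall j, \forall y \near (0 : 'cV[R]_k)^', P j y) ->
  exists d : nat -> R, [/\ forall j, 0 < d j, forall j, d j <= j.+1%:R^-1,
    nonincreasing_seq d & forall j y, y != 0 -> enorm y < d j -> P j y].
Proof.
move=> P_near.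
have /choice [e e_ok] : forall j, exists e : R,
    0 < e /\ forall y, enorm y < e -> y != 0 -> P j y.
  by move=> j; have [e e_gt0 Pe] := near0_enorm (P_near j); exists e.
exists (runmin (fun j => Num.min (e j) j.+1%:R^-1)); split.
- by apply: runmin_gt0 => j; rewrite lt_min (e_ok j).1 invr_gt0 ltr0n.
- by move=> j; apply: le_trans (runmin_le _ j) _; rewrite ge_min lexx orbT.
- exact: runmin_noninc.
move=> j y y_neq0 yd; apply: (e_ok j).2 y_neq0; apply: lt_le_trans yd _.
by apply: le_trans (runmin_le _ j) _; rewrite ge_min lexx.
Qed.

Lemma gt0_of_mono_cvg0 (R : realType) (sigma : R -> R) :
  {in `]0, +oo[ &, {mono sigma : s t / s < t}} ->
  sigma t @[t --> 0^'+] --> 0 -> forall t, 0 < t -> 0 < sigma t.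
Proof.
move=> mono lim t t_gt0; have t2_gt0 : 0 < t / 2 by rewrite divr_gt0.
have t2_lt : t / 2 < t by rewrite ltr_pdivrMr // ltr_pMr // ltr1n.
apply: (@le_lt_trans _ _ (sigma (t / 2))); last by rewrite mono ?in_itv /= ?andbT.
apply: (cvgr_to_le lim); near=> s.
have s_gt0 : 0 < s by near: s; exact: nbhs_right_gt.
by rewrite ltW // mono ?in_itv /= ?andbT //; near: s; exact: nbhs_right_lt.
Unshelve. all: by end_near.
Qed.

Lemma exists_C2_majorant (R : realType) k (f : 'cV[R]_k -> R) :
  f y @[y --> (0 : 'cV[R]_k)^'] --> 0 ->
  exists sigma : R -> R,
    [/\ {in `]0, +oo[ &, {mono sigma : s t / s < t}}, C2_on `]0, +oo[ sigma,
        sigma t @[t --> 0^'+] --> 0 &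
        \forall z \near (0 : 'cV[R]_k)^', f z <= sigma (enorm z)].
Proof.
move=> f_cvg0.
have f_small j : \forall y \near (0 : 'cV[R]_k)^', f y <= halfpow R j.
  exact: cvgr_le f_cvg0 _ (halfpow_gt0 R j).
have [d [d_gt0 d_le d_noninc d_small]] := shrinking_radii f_small.
exists (majorant d); split.
- exact: majorant_mono.
- exact: majorant_C2.
- exact: majorant_cvg0.
have near_d0 : \forall z \near (0 : 'cV[R]_k)^', enorm z < d 0.
  exact: cvgr_lt (cvg_trans (enorm_cvg0 k) (cvg_within _)) _ (d_gt0 0).
near=> z; have z_neq0 : z != 0 by near: z; exact: nbhs_dnbhs_neq.
have z_gt0 := enorm_gt0 z_neq0.
have zd0 : enorm z < d 0 by near: z; exact: near_d0.
have [j [zj jz]] := radius_bracket d_le z_gt0 zd0.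
apply: le_trans (d_small j z z_neq0 zj) _.
exact: majorant_ge_halfpow.
Unshelve. all: by end_near.
Qed.

Section ContactJet.
Variables (R : realType) (n N : nat) (u : 'cV[R]_n -> 'cV[R]_N).
Variables (x : 'cV[R]_n) (xi : 'cV[R]_N) (P : 'M[R]_(N, n)) (X : 'I_N -> 'M[R]_n).
Hypothesis xi_unit : enorm xi = 1.

Definition taylor_rem (z : 'cV[R]_n) : 'cV[R]_N :=
  u (z + x) - u x - P *m z - 2^-1 *: tcontract X z.

Definition contact_ineq (sigma : R -> R) : Prop :=
  \forall z \near (0 : 'cV[R]_n)^',
    let Q := taylor_rem z in
    (xi^T *m Q) 0 0 <=
      - (enorm ((1%:M - xi *m xi^T) *m Q)) ^+ 2 / (sigma (enorm z) * (enorm z) ^+ 2)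
      + sigma (enorm z) * (enorm z) ^+ 2.

Lemma contact_ineqE sigma : contact_ineq sigma <->
  \forall z \near (0 : 'cV[R]_n)^',
    dotv xi (taylor_rem z) <=
      - dotv (orthpart xi (taylor_rem z)) (orthpart xi (taylor_rem z))
        / (sigma (enorm z) * (enorm z) ^+ 2) + sigma (enorm z) * (enorm z) ^+ 2.
Proof.
by split; apply: filterS => z /=;
  rewrite mulmx_orthoproj dotvE [enorm (orthpart _ _) ^+ 2]enorm_sqr.
Qed.

Lemma contact_jet2_shift (T : 'cV[R]_n -> 'M[R]_N) :
  (\forall z \near x, z != x ->
     mx_le (symprod xi (u z - u x - P *m (z - x) - 2^-1 *: tcontract X (z - x)))
           ((enorm (z - x)) ^+ 2 *: T (z - x))) <->
  \forall y \near (0 : 'cV[R]_n)^',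
     mx_le (symprod xi (taylor_rem y)) ((enorm y) ^+ 2 *: T y).
Proof.
by rewrite (dnbhs0_shift x) /taylor_rem; split; apply: filterS => z; rewrite subrK.
Qed.

Lemma contact_ineq_of_jet : contact_jet2 u x xi P X ->
  exists sigma : R -> R,
    {in `]0, +oo[ &, {mono sigma : s t / s < t}} /\ C2_on `]0, +oo[ sigma /\
    (sigma t @[t --> 0^'+] --> 0) /\ contact_ineq sigma.
Proof.
move=> [T [_ [T_cvg0 /contact_jet2_shift jet]]].
set rho := fun y => 4 * (N%:R ^+ 2 * `|T y|).
have rho_cvg0 : rho y @[y --> (0 : 'cV[R]_n)^'] --> 0.
  rewrite -(mulr0 4) -(mulr0 (N%:R ^+ 2)); apply: cvgMl_tmp; apply: cvgMl_tmp.
  by rewrite -(@normr0 _ 'M[R]_N); apply: cvg_norm.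
have [sigma [mono C2 lim major]] := exists_C2_majorant rho_cvg0.
have sigma_gt0 := gt0_of_mono_cvg0 mono lim.
exists sigma; do !split => //; apply/contact_ineqE.
near=> z.
have z_gt0 : 0 < enorm z by apply: enorm_gt0; near: z; exact: nbhs_dnbhs_neq.
apply: (contact_ineq_of_symprod_qform (c := enorm z ^+ 2 * (N%:R ^+ 2 * `|T z|))).
- by rewrite mulr_gt0 ?sigma_gt0 ?exprn_gt0.
- rewrite mulrCA mulrC ler_wpM2r ?exprn_ge0 ?enorm_ge0 //.
  by near: z; apply: filterS major.
- by rewrite -enorm_sqr xi_unit expr1n.
move=> w; rewrite -symprod_qform; apply: le_trans (near jet z _ w) _ => //.
rewrite -scalemxAr -scalemxAl mxE -mulrA ler_wpM2l ?exprn_ge0 ?enorm_ge0 //.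
exact: qform_le_mx_norm.
Unshelve. all: by end_near.
Qed.

Lemma jet_of_contact_ineq (sigma : R -> R) :
  {in `]0, +oo[ &, {mono sigma : s t / s < t}} -> C2_on `]0, +oo[ sigma ->
  sigma t @[t --> 0^'+] --> 0 -> contact_ineq sigma -> contact_jet2 u x xi P X.
Proof.
move=> mono [sigma_d1 _] lim /contact_ineqE contact.
have sigma_gt0 := gt0_of_mono_cvg0 mono lim.
exists (fun y => (2 * sigma (enorm y)) *: 1%:M); split; [|split].
- apply: continuous_in_subspaceT => y; rewrite inE /= => y_neq0.
  apply: (@cvgZr_tmp _ _ _ _ (nbhs_filter y)); apply: cvgMl_tmp.
  apply: (continuous_comp (@continuous_enorm _ _ y)).
  apply/differentiable_continuous/derivable1_diffP/sigma_d1.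
  by rewrite /= in_itv /= andbT enorm_gt0.
- rewrite -(scale0r 1%:M) -(mulr0 2).
  by apply: cvgZr_tmp; apply: cvgMl_tmp; apply: cvg_comp (enorm_cvg0 n) lim.
apply/(contact_jet2_shift (fun y => (2 * sigma (enorm y)) *: 1%:M)); near=> y => w.
have y_gt0 : 0 < enorm y by apply: enorm_gt0; near: y; exact: nbhs_dnbhs_neq.
rewrite symprod_qform scalerA scalar_qform.
have -> : enorm y ^+ 2 * (2 * sigma (enorm y)) = 2 * (sigma (enorm y) * enorm y ^+ 2).
  by ring.
apply: symprod_qform_le_of_contact_ineq; first by rewrite mulr_gt0 ?exprn_gt0 ?sigma_gt0.
  by rewrite -enorm_sqr xi_unit expr1n.
by near: y.
Unshelve. all: by end_near.
Qed.
End ContactJet.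

Unset Implicit Arguments.

Theorem theorem27 (R : realType) (n N : nat) (Omega : set 'cV[R]_n)
  (u : 'cV[R]_n -> 'cV[R]_N) (x : 'cV[R]_n) (xi : 'cV[R]_N)
  (P : 'M[R]_(N, n)) (X : 'I_N -> 'M[R]_n) :
  open Omega -> {within Omega, continuous u} -> Omega x ->
  enorm xi = 1 -> tensor_sym X ->
  (contact_jet2 u x xi P X <->
   exists sigma : R -> R,
     {in `]0, +oo[ &, {mono sigma : s t / s < t}} /\
     C2_on `]0, +oo[ sigma /\
     (sigma t @[t --> 0^'+] --> 0) /\
     (\forall z \near (0 : 'cV[R]_n)^',
        let Q := u (z + x) - u x - P *m z - 2^-1 *: tcontract X z in
        (xi^T *m Q) 0 0 <=
          - (enorm ((1%:M - xi *m xi^T) *m Q)) ^+ 2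
              / (sigma (enorm z) * (enorm z) ^+ 2)
          + sigma (enorm z) * (enorm z) ^+ 2)).
Proof.
(* Both conditions only involve the Taylor remainder of [u] at [x]. *)
move=> _ _ _ xi_unit _; split; first exact: contact_ineq_of_jet.
by case=> sigma [mono [C2 [lim contact]]]; exact: (jet_of_contact_ineq xi_unit mono C2 lim).
Qed.
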